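(* Let $u$ and $v$ be two prime words such that $u<_{lex}v$. Then $u^\alpha<_{lex}u^\alpha v\le_{lex}v$ for every ordinal $\alpha$.
   Context: $A$ is a finite alphabet with a linear order $<_A$. Words are sequences of letters indexed by countable ordinals, $x^\alpha$ is the concatenation of $\alpha$ copies of $x$. A suffix of $x$ is $x[\gamma,|x|)$, proper if $0<\gamma<|x|$. Write $x<_{str}x'$ if there are letters $a<_Ab$ and words $y,z,z'$ with $x=yaz$, $x'=ybz'$; $x\le_{lex}x'$ iff $x$ is a prefix of $x'$ or $x<_{str}x'$; $<_{lex}$ is its strict version. A word is primitive if $x=y^\alpha$ implies $\alpha=1$ and $y=x$; $w$ is prime if it is primitive and every proper suffix $z$ satisfies $w\le_{lex}z$. *)

(* An "ordinal" is represented by a (raw) strictly ordered type; validity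
   (strict total, well-founded, countable) is a separate predicate [is_ord].
   Words are compared up to label-preserving order isomorphism [weq]. *)
From HB Require Import structures.
From mathcomp Require Import all_boot all_order.
Set Implicit Arguments. Unset Strict Implicit. Unset Printing Implicit Defensive.
Import Order.TTheory.
Local Open Scope order_scope.

Record ord := Ord { ot : Type; olt : ot -> ot -> Prop }.

Definition is_ord (o : ord) : Prop :=
  [/\ (forall x : ot o, ~ olt x x),
      (forall x y z : ot o, olt x y -> olt y z -> olt x z),
      (forall x y : ot o, olt x y \/ x = y \/ olt y x),
      well_founded (@olt o)
    & exists f : ot o -> nat, injective f].

Definition Osum (a b : ord) : ord :=
  Ord (fun p q : ot a + ot b => match p, q with
    | inl x, inl y => olt x y
    | inr x, inr y => olt x y
    | inl _, inr _ => True
    | inr _, inl _ => False end).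

(* ordinal product: alpha copies of x, positions (i, p), i in alpha major *)
Definition Oprod (x alpha : ord) : ord :=
  Ord (fun p q : ot alpha * ot x =>
         olt p.1 q.1 \/ (p.1 = q.1 /\ olt p.2 q.2)).

Section Words.
Variables (d : Order.disp_t) (A : finOrderType d).

Record word := Word { wo : ord; lab : ot wo -> A }.

Definition is_word (w : word) : Prop := is_ord (wo w).

Definition nonempty (w : word) : Prop := inhabited (ot (wo w)).

Definition wletter (c : A) : word :=
  @Word (Ord (fun _ _ : unit => False)) (fun _ => c).

Definition wcat (x y : word) : word :=
  @Word (Osum (wo x) (wo y))
    (fun p => match p with inl i => lab i | inr j => lab j end).

Definition wpow (x : word) (alpha : ord) : word :=
  @Word (Oprod (wo x) alpha) (fun p => lab p.2).

Definition weq (x y : word) : Prop :=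
  exists f : ot (wo x) -> ot (wo y),
    [/\ bijective f,
        (forall p q, olt p q <-> olt (f p) (f q))
      & (forall p, lab (f p) = lab p)].

Definition wprefix (x x' : word) : Prop :=
  exists z, is_word z /\ weq x' (wcat x z).

Definition str_lt (x x' : word) : Prop :=
  exists (y z z' : word) (a b : A),
    [/\ is_word y, is_word z, is_word z', a < b &
        weq x (wcat (wcat y (wletter a)) z) /\
        weq x' (wcat (wcat y (wletter b)) z')].

Definition lex_le (x x' : word) : Prop := wprefix x x' \/ str_lt x x'.
Definition lex_lt (x x' : word) : Prop := lex_le x x' /\ ~ weq x x'.

Definition is_one (alpha : ord) : Prop := exists t : ot alpha, forall s, s = t.

Definition primitive (x : word) : Prop :=
  forall (y : word) (alpha : ord), is_word y -> is_ord alpha ->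
    weq x (wpow y alpha) -> is_one alpha /\ weq y x.

Definition prime_word (w : word) : Prop :=
  primitive w /\
  forall y z : word, is_word y -> is_word z -> nonempty y -> nonempty z ->
    weq w (wcat y z) -> lex_le w z.

End Words.

(* Words are compared through their positions: [seg_le x y] holds when x is
   isomorphic, letters included, to an initial segment of y, or when the
   segments below some positions p of x and q of y are isomorphic and
   lab p < lab q.  Since positions are well-ordered such isomorphisms are
   unique, so that [seg_le x y] and its strict converse [seg_lt y x] are
   complementary, and [seg_le] coincides with [lex_le].
   The word u^alpha is a proper prefix of u^alpha v because a well-order is not
   isomorphic to a proper initial segment of itself.  If u <str v, the first
   copy of u already gives u^alpha v <str v.  If u is a proper prefix of v and
   v < u^alpha v, match v against u^alpha v: the positions of v sent into
   complete copies of u form a prefix u^beta of v, and the remaining suffix s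
   is sent into the next copy of u or into the final v, so that s < u <= v or
   s < v.  That prefix is not all of v since v is primitive, hence v <= s
   since v is prime, a contradiction. *)

From mathcomp Require Import all_boot all_order.
From Stdlib Require Import Classical ClassicalEpsilon ProofIrrelevance Wellfounded.
Set Implicit Arguments. Unset Strict Implicit. Unset Printing Implicit Defensive.
Import Order.TTheory.
Local Open Scope order_scope.

Lemma sig_inj (T : Type) (P : T -> Prop) (a b : {x | P x}) :
  proj1_sig a = proj1_sig b -> a = b.
Proof. by apply: eq_sig_hprop => x; apply: proof_irrelevance. Qed.

Definition down_closed (o : ord) (S : ot o -> Prop) : Prop :=
  forall x y : ot o, olt x y -> S y -> S x.

Lemma down_closedT (o : ord) : down_closed (fun _ : ot o => True).
Proof. by []. Qed.

Definition Osub (o : ord) (P : ot o -> Prop) : ord :=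
  Ord (fun a b : {x | P x} => olt (proj1_sig a) (proj1_sig b)).

Section WellOrder.
Variable o : ord.
Hypothesis Ho : is_ord o.

Lemma olt_irr (x : ot o) : ~ olt x x.
Proof. by case: Ho => H _ _ _ _; apply: H. Qed.

Lemma olt_trans (x y z : ot o) : olt x y -> olt y z -> olt x z.
Proof. by case: Ho => _ H _ _ _; apply: H. Qed.

Lemma olt_total (x y : ot o) : olt x y \/ x = y \/ olt y x.
Proof. by case: Ho => _ _ H _ _; apply: H. Qed.

Lemma olt_wf : well_founded (@olt o).
Proof. by case: Ho. Qed.

Lemma olt_asym (x y : ot o) : olt x y -> olt y x -> False.
Proof. by move=> xy /(olt_trans xy); apply: olt_irr. Qed.

Lemma ex_olt_min (P : ot o -> Prop) :
  (exists x, P x) -> exists x, P x /\ forall y, P y -> ~ olt y x.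
Proof.
move=> [x Px]; apply: NNPP => noMin; elim/(well_founded_ind olt_wf): x Px.
by move=> x IH Px; apply: noMin; exists x; split=> // y Py /IH; apply.
Qed.

Lemma down_closed_lt (p : ot o) : down_closed (fun r => olt r p).
Proof. by move=> x y; apply: olt_trans. Qed.

Lemma down_closed_lt_min (S : ot o -> Prop) :
  down_closed S -> (exists r, ~ S r) -> exists p, forall r, S r <-> olt r p.
Proof.
move=> dS /ex_olt_min [p [nSp minp]]; exists p => r; split=> [Sr | rp].
- case: (olt_total r p) => [// | [erp | pr]]; first by rewrite erp in Sr.
  by case: nSp; apply: dS pr Sr.
- by apply: NNPP => /minp; apply.
Qed.

Lemma olt_ext (p q : ot o) : (forall r, olt r p <-> olt r q) -> p = q.
Proof.
move=> E; case: (olt_total p q) => [pq | [// | qp]].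
- by case: (olt_irr ((E p).2 pq)).
- by case: (olt_irr ((E q).1 qp)).
Qed.

End WellOrder.
Arguments down_closed_lt {o} Ho p.

Lemma is_ord_sub (o : ord) (P : ot o -> Prop) : is_ord o -> is_ord (Osub P).
Proof.
move=> Ho; split.
- move=> x; exact: (olt_irr Ho).
- move=> x y z; exact: (olt_trans Ho).
- move=> x y; case: (olt_total Ho (proj1_sig x) (proj1_sig y)) => [xy | [/sig_inj xy | yx]].
  + by left.
  + by right; left.
  + by right; right.
- exact: wf_inverse_image (olt_wf Ho).
- case: Ho => _ _ _ _ [f f_inj].
  by exists (fun x => f (proj1_sig x)) => x y /f_inj /sig_inj.
Qed.

Lemma is_ord_sum (a b : ord) : is_ord a -> is_ord b -> is_ord (Osum a b).
Proof.
move=> Ha Hb; split.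
- by case=> x /=; [exact: (olt_irr Ha) | exact: (olt_irr Hb)].
- by case=> x [] y [] z //=; [exact: (olt_trans Ha) | exact: (olt_trans Hb)].
- case=> x [] y /=; [| by left | by right; right |].
  + by case: (olt_total Ha x y) => [xy | [-> | yx]]; [left | right; left | right; right].
  + by case: (olt_total Hb x y) => [xy | [-> | yx]]; [left | right; left | right; right].
- have acc_inl x : Acc (@olt (Osum a b)) (inl x).
    elim/(well_founded_ind (olt_wf Ha)): x => x IH.
    by constructor; case=> // y /IH.
  case=> x; first exact: acc_inl.
  elim/(well_founded_ind (olt_wf Hb)): x => x IH.
  by constructor; case=> [y _ | y /IH].
- case: Ha => _ _ _ _ [f f_inj]; case: Hb => _ _ _ _ [g g_inj].
  pose code p := match p with inl x => inl (f x) | inr y => inr (g y) end : nat + nat.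
  exists (fun p => pickle (code p)) => [[x|x] [y|y]] /(pcan_inj pickleK) //= [].
  + by move/f_inj ->.
  + by move/g_inj ->.
Qed.

Lemma is_ord_prod (x a : ord) : is_ord x -> is_ord a -> is_ord (Oprod x a).
Proof.
move=> Hx Ha; split.
- by move=> [i p] /= [/(olt_irr Ha) | [_ /(olt_irr Hx)]].
- move=> [i p] [j q] [k r] /= [ij | [<- pq]] [jk | [<- qr]] /=.
  + by left; exact: (olt_trans Ha ij jk).
  + by left.
  + by left.
  + by right; split=> //; exact: (olt_trans Hx pq qr).
- move=> [i p] [j q] /=; case: (olt_total Ha i j) => [ij | [<- | ji]].
  + by left; left.
  + case: (olt_total Hx p q) => [pq | [<- | qp]].
    * by left; right.
    * by right; left.
    * by right; right; right.
  + by right; right; left.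
- suff acc i p : Acc (@olt (Oprod x a)) (i, p) by case.
  elim/(well_founded_ind (olt_wf Ha)): i p => i IHi p.
  elim/(well_founded_ind (olt_wf Hx)): p => p IHp.
  by constructor=> -[j q] /= [/IHi // | [-> /IHp]].
- case: Ha => _ _ _ _ [f f_inj]; case: Hx => _ _ _ _ [g g_inj].
  exists (fun p => pickle (f p.1, g p.2)).
  by move=> [i p] [j q] /(pcan_inj pickleK) [/f_inj -> /g_inj ->].
Qed.

Section Words.
Variables (d : Order.disp_t) (A : finOrderType d).
Local Notation W := (word A).
Local Notation pos w := (ot (wo w)).

Definition wsub (w : W) (S : pos w -> Prop) : W :=
  @Word _ A (Osub S) (fun a => lab (proj1_sig a)).
Arguments wsub : clear implicits.

Lemma is_word_sub (w : W) S : is_word w -> is_word (wsub w S).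
Proof. exact: is_ord_sub. Qed.

Lemma is_word_cat (x z : W) : is_word x -> is_word z -> is_word (wcat x z).
Proof. exact: is_ord_sum. Qed.

Lemma is_word_pow (u : W) (a : ord) : is_word u -> is_ord a -> is_word (wpow u a).
Proof. exact: is_ord_prod. Qed.

Lemma is_word_letter (c : A) : is_word (wletter c).
Proof.
split=> //=.
- by move=> _ [].
- by move=> [] []; right; left.
- by exists (fun _ => 0) => [[] []].
Qed.

Record isom_on (x y : W) (S : pos x -> Prop) (T : pos y -> Prop)
    (f : pos x -> pos y) : Prop := IsomOn {
  isom_map : forall p, S p -> T (f p);
  isom_onto : forall q, T q -> exists2 p, S p & f p = q;
  isom_mono : forall p p', S p -> S p' -> olt p p' -> olt (f p) (f p');
  isom_lab : forall p, S p -> lab (f p) = lab p }.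
Arguments isom_on : clear implicits.

Definition isomorphic_on (x y : W) S T := exists f, isom_on x y S T f.
Arguments isomorphic_on : clear implicits.

Lemma isom_on_id (x : W) S : isom_on x x S S id.
Proof. by split=> // q Sq; exists q. Qed.

Lemma isom_on_comp (x y z : W) S T R f g :
  isom_on x y S T f -> isom_on y z T R g -> isom_on x z S R (fun p => g (f p)).
Proof.
move=> [f_map f_onto f_mono f_lab] [g_map g_onto g_mono g_lab]; split.
- by move=> p /f_map /g_map.
- move=> r /g_onto [q /f_onto [p Sp <-] <-]; by exists p.
- by move=> p p' Sp Sp' pp'; apply: g_mono; [apply: f_map | apply: f_map | apply: f_mono].
- by move=> p Sp; rewrite g_lab ?f_lab //; apply: f_map.
Qed.

Lemma isom_on_ext (x y : W) S S' T T' f :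
  (forall p, S p <-> S' p) -> (forall q, T q <-> T' q) ->
  isom_on x y S T f -> isom_on x y S' T' f.
Proof.
move=> ES ET [f_map f_onto f_mono f_lab]; split.
- by move=> p /ES /f_map /ET.
- by move=> q /ET /f_onto [p /ES Sp <-]; exists p.
- by move=> p p' /ES Sp /ES Sp'; apply: f_mono.
- by move=> p /ES; apply: f_lab.
Qed.

Lemma isom_on_sub (x y : W) S T (P : pos x -> Prop) (Q : pos y -> Prop) f :
  (forall p, S p -> (P p <-> Q (f p))) -> isom_on x y S T f ->
  isom_on (wsub x P) y (fun a => S (proj1_sig a)) (fun q => T q /\ Q q)
    (fun a => f (proj1_sig a)).
Proof.
move=> EPQ [f_map f_onto f_mono f_lab]; split.
- by move=> [p Pp] /= Sp; split; [apply: f_map | apply/EPQ].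
- move=> q [/f_onto [p Sp <-] Qfp].
  by exists (exist _ p ((EPQ p Sp).2 Qfp)).
- by move=> [p _] [p' _] /=; apply: f_mono.
- by move=> [p _] /=; apply: f_lab.
Qed.

Lemma isom_on_val (x : W) (T : pos x -> Prop) :
  isom_on (wsub x T) x (fun _ => True) T (fun a => proj1_sig a).
Proof. by split=> // [[p Tp] _ | q Tq] //; exists (exist _ q Tq). Qed.

Lemma down_closed_isom_preimage (x y : W) S T D f :
  isom_on x y S T f -> down_closed S -> down_closed D ->
  down_closed (fun p => S p /\ D (f p)).
Proof.
move=> Hf dS dD p' p p'p [Sp Dfp]; have Sp' := dS _ _ p'p Sp.
by split=> //; apply: dD Dfp; apply: (isom_mono Hf).
Qed.

Section WellOrderedWords.
Variables x y : W.
Hypotheses (Hx : is_word x) (Hy : is_word y).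

Lemma isom_on_reflect_lt S T f p p' : isom_on x y S T f -> S p -> S p' ->
  olt (f p) (f p') -> olt p p'.
Proof.
move=> Hf Sp Sp' fpp'; case: (olt_total Hx p p') => [// | [epp' | p'p]].
- by rewrite epp' in fpp'; case: (olt_irr Hy fpp').
- by case: (olt_asym Hy fpp' (isom_mono Hf Sp' Sp p'p)).
Qed.

Lemma isom_on_inj S T f p p' : isom_on x y S T f -> S p -> S p' -> f p = f p' -> p = p'.
Proof.
move=> Hf Sp Sp' efpp'; case: (olt_total Hx p p') => [pp' | [// | p'p]].
- by have := isom_mono Hf Sp Sp' pp'; rewrite efpp' => /(olt_irr Hy).
- by have := isom_mono Hf Sp' Sp p'p; rewrite efpp' => /(olt_irr Hy).
Qed.

Lemma isom_on_inv S T f : isom_on x y S T f -> inhabited (pos x) ->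
  exists g, [/\ isom_on y x T S g, (forall q, T q -> f (g q) = q)
               & (forall p, S p -> g (f p) = p)].
Proof.
move=> Hf [p0]; have pre q : exists p, T q -> S p /\ f p = q.
  case: (classic (T q)) => [/(isom_onto Hf) [p Sp efp] | nTq]; last by exists p0.
  by exists p.
pose g q := proj1_sig (constructive_indefinite_description _ (pre q)).
have gP q : T q -> S (g q) /\ f (g q) = q.
  exact: proj2_sig (constructive_indefinite_description _ (pre q)).
have gK p : S p -> g (f p) = p.
  move=> Sp; have [Sgfp egfp] := gP _ (isom_map Hf Sp).
  exact: isom_on_inj Hf Sgfp Sp egfp.
exists g; split=> // [|q /gP []//]; split.
- by move=> q /gP [].
- by move=> p Sp; exists (f p); [apply: (isom_map Hf) | apply: gK].
- move=> q q' Tq Tq' qq'; have [Sgq egq] := gP _ Tq; have [Sgq' egq'] := gP _ Tq'.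
  by apply: (isom_on_reflect_lt Hf Sgq Sgq'); rewrite egq egq'.
- by move=> q Tq; have [Sgq egq] := gP _ Tq; rewrite -{2}egq (isom_lab Hf Sgq).
Qed.

(* The usual argument that an order embedding of a well-order satisfies
   [p <= g p], relativised to a partial isomorphism [f]. *)
Lemma isom_on_least S T f g : isom_on x y S T f -> down_closed T ->
  (forall p p', S p -> S p' -> olt p p' -> olt (g p) (g p')) ->
  forall p, S p -> ~ olt (g p) (f p).
Proof.
move=> Hf dT g_mono p; elim/(well_founded_ind (olt_wf Hx)): p => p IH Sp gpfp.
have [p' Sp' efp'] := isom_onto Hf (dT _ _ gpfp (isom_map Hf Sp)).
have p'p : olt p' p by apply: (isom_on_reflect_lt Hf Sp' Sp); rewrite efp'.
by apply: (IH p' p'p Sp'); rewrite efp'; apply: g_mono.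
Qed.

Lemma isom_on_restr_lt S T f p : isom_on x y S T f -> down_closed S -> down_closed T ->
  S p -> isom_on x y (fun r => olt r p) (fun r => olt r (f p)) f.
Proof.
move=> Hf dS dT Sp; have Sr r : olt r p -> S r by move/dS; apply.
split.
- by move=> r rp; apply: (isom_mono Hf) => //; apply: Sr.
- move=> q qfp; have [r Sr' efr] := isom_onto Hf (dT _ _ qfp (isom_map Hf Sp)).
  by exists r => //; apply: (isom_on_reflect_lt Hf Sr' Sp); rewrite efr.
- by move=> r r' /Sr Sr0 /Sr Sr'; apply: (isom_mono Hf).
- by move=> r /Sr; apply: (isom_lab Hf).
Qed.

End WellOrderedWords.

Lemma isom_on_self_id (x : W) S S' f : is_word x -> isom_on x x S S' f ->
  down_closed S -> down_closed S' ->
  (forall p, S p -> f p = p) /\ (forall p, S p <-> S' p).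
Proof.
move=> Hx Hf dS dS'.
have fid p : S p -> f p = p.
  move=> Sp; case: (olt_total Hx (f p) p) => [fpp | [// | pfp]].
  - by case: (isom_on_least Hx Hx (isom_on_id S) dS (isom_mono Hf) Sp fpp).
  - by case: (isom_on_least Hx Hx Hf dS' (g := id) (fun _ _ _ _ h => h) Sp pfp).
split=> // p; split=> [Sp | /(isom_onto Hf) [p' Sp' <-]]; last by rewrite fid.
by rewrite -(fid p Sp); apply: (isom_map Hf).
Qed.

End Words.
Arguments wsub {d A} w S.
Arguments isom_on {d A} x y S T f.
Arguments isomorphic_on {d A} x y S T.

Section Comparison.
Variables (d : Order.disp_t) (A : finOrderType d).
Local Notation W := (word A).
Local Notation pos w := (ot (wo w)).

Definition seg_prefix (x y : W) : Prop :=
  exists2 T, down_closed T & isomorphic_on x y (fun _ => True) T.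

Definition seg_proper_prefix (x y : W) : Prop :=
  exists p, isomorphic_on x y (fun _ => True) (fun r => olt r p).

Definition seg_str_lt (x y : W) : Prop := exists p q,
  isomorphic_on x y (fun r => olt r p) (fun r => olt r q) /\ lab p < lab q.

Definition seg_le (x y : W) : Prop := seg_prefix x y \/ seg_str_lt x y.

Definition seg_lt (x y : W) : Prop := seg_proper_prefix x y \/ seg_str_lt x y.

Definition lt_cut (x : W) (S : pos x -> Prop) (c : A) : Prop :=
  (forall r, S r) \/ exists2 q, (forall r, S r <-> olt r q) & lab q < c.

Lemma lt_cut_down_closed (x : W) (S : pos x -> Prop) c : is_word x -> lt_cut S c -> down_closed S.
Proof.
move=> Hx [allS | [q ES _]] r r' rr'; first by [].
by move/ES/(olt_trans Hx rr')/ES.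
Qed.

Lemma seg_ltP (x y : W) : seg_lt x y <->
  exists S p f, isom_on x y S (fun r => olt r p) f /\ lt_cut S (lab p).
Proof.
split=> [[[p [f Hf]] | [q [p [[f Hf] qp]]]] | [S [p [f [Hf [allS | [q ES qp]]]]]]].
- by exists (fun _ => True), p, f; split=> //; left.
- by exists (fun r => olt r q), p, f; split=> //; right; exists q.
- by left; exists p, f; apply: isom_on_ext Hf.
- by right; exists q, p; split=> //; exists f; apply: isom_on_ext Hf.
Qed.

Lemma seg_prefix_refl (x : W) : seg_prefix x x.
Proof. by exists (fun _ => True) => //; exists id; apply: isom_on_id. Qed.

Lemma isomorphic_on_empty (x y : W) : ~ inhabited (pos x) ->
  isomorphic_on x y (fun _ => True) (fun _ => False).
Proof.
move=> nx; exists (fun p => False_rect _ (nx (inhabits p))).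
by split=> // p; case: (nx (inhabits p)).
Qed.

Lemma seg_proper_prefix_of_isom (x y : W) T f : is_word y ->
  isom_on x y (fun _ => True) T f -> down_closed T -> (exists q, ~ T q) ->
  seg_proper_prefix x y.
Proof.
move=> Hy Hf dT /(down_closed_lt_min Hy dT) [q Eq].
by exists q, f; apply: isom_on_ext Hf.
Qed.

Section TwoWords.
Variables x y : W.
Hypotheses (Hx : is_word x) (Hy : is_word y).

Lemma isom_on_lt_eq p p' h :
  isom_on x x (fun r => olt r p) (fun r => olt r p') h -> p = p'.
Proof.
move=> Hh; apply: (olt_ext Hx) => r.
exact: (isom_on_self_id Hx Hh (down_closed_lt Hx p) (down_closed_lt Hx p')).2 r.
Qed.

Definition match_at (p : pos x) (q : pos y) : Prop :=
  isomorphic_on x y (fun r => olt r p) (fun r => olt r q) /\ lab p = lab q.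

Lemma match_at_fun p q q' : match_at p q -> match_at p q' -> q = q'.
Proof.
move=> [[f Hf] _] [[g Hg] _].
have [f' [Hf' _ _]] := isom_on_inv Hx Hy Hf (inhabits p).
apply: (olt_ext Hy) => r.
exact: (isom_on_self_id Hy (isom_on_comp Hf' Hg) (down_closed_lt Hy q) (down_closed_lt Hy q')).2 r.
Qed.

Lemma match_at_downl p q p' : match_at p q -> olt p' p ->
  exists2 q', match_at p' q' & olt q' q.
Proof.
move=> [[f Hf] _] p'p; exists (f p'); last exact: (isom_map Hf p'p).
split; last by rewrite (isom_lab Hf p'p).
by exists f; exact: (isom_on_restr_lt Hx Hy Hf (down_closed_lt Hx p) (down_closed_lt Hy q) p'p).
Qed.

Lemma match_at_downr p q q' : match_at p q -> olt q' q ->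
  exists2 p', match_at p' q' & olt p' p.
Proof.
move=> [[f Hf] _] /(isom_onto Hf) [p' p'p <-]; exists p' => //.
split; last by rewrite (isom_lab Hf p'p).
by exists f; exact: (isom_on_restr_lt Hx Hy Hf (down_closed_lt Hx p) (down_closed_lt Hy q) p'p).
Qed.

(* The union of all matches [match_at p q] is a partial isomorphism between
   initial segments; its domain contains every matched position. *)
Lemma ex_maximal_match : inhabited (pos y) ->
  exists S T f, [/\ down_closed S, down_closed T, isom_on x y S T f
                  & forall p q, match_at p q -> S p].
Proof.
move=> [y0]; pose S p := exists q, match_at p q; pose T q := exists p, match_at p q.
have img p : exists q, S p -> match_at p q.
  by case: (classic (S p)) => [[q Mpq] | nSp]; [exists q | exists y0].
pose f p := proj1_sig (constructive_indefinite_description _ (img p)).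
have fP p : S p -> match_at p (f p).
  exact: proj2_sig (constructive_indefinite_description _ (img p)).
exists S, T, f; split=> [p' p p'p [q /match_at_downl/(_ p'p) [q' Mq' _]] |
                         q' q q'q [p /match_at_downr/(_ q'q) [p' Mp' _]] | |].
- by exists q'.
- by exists p'.
- split.
  + by move=> p /fP Mp; exists p.
  + move=> q [p Mpq]; exists p; first by exists q.
    exact: match_at_fun (fP p (ex_intro _ q Mpq)) Mpq.
  + move=> p p' Sp Sp' pp'; have [q' Mq' q'fp] := match_at_downl (fP p' Sp') pp'.
    by rewrite (match_at_fun (fP p Sp) Mq').
  + by move=> p /fP [_ ->].
- by move=> p q Mpq; exists q.
Qed.

Lemma seg_le_or_gt : seg_le x y \/ seg_lt y x.
Proof.
case: (classic (inhabited (pos y))) => [y0 | ny]; last first.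
  case: (classic (inhabited (pos x))) => [[x0] | nx].
  - have [f Hf] := isomorphic_on_empty x ny.
    by right; left; apply: (seg_proper_prefix_of_isom Hx Hf) => //; exists x0.
  - by left; left; exists (fun _ => False) => //; apply: isomorphic_on_empty.
have [S [T [f [dS dT Hf maxS]]]] := ex_maximal_match y0.
case: (classic (forall p, S p)) => [allS | /not_all_ex_not nS].
  by left; left; exists T => //; exists f; apply: isom_on_ext Hf.
have [p0 Ep0] := down_closed_lt_min Hx dS nS.
case: (classic (forall q, T q)) => [allT | /not_all_ex_not nT].
  have [g [Hg _ _]] := isom_on_inv Hx Hy Hf (inhabits p0).
  by right; left; apply: (seg_proper_prefix_of_isom Hx (isom_on_ext _ _ Hg) dS nS).
have [q0 Eq0] := down_closed_lt_min Hy dT nT.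
have Hf0 := isom_on_ext Ep0 Eq0 Hf.
have /lt_total/orP[lt_pq | lt_qp] : lab p0 != lab q0.
  apply/eqP => epq; have /Ep0 := maxS p0 q0 (conj (ex_intro _ f Hf0) epq).
  exact: (olt_irr Hx).
- by left; right; exists p0, q0; split=> //; exists f.
- have [g [Hg _ _]] := isom_on_inv Hx Hy Hf0 (inhabits p0).
  by right; right; exists q0, p0; split=> //; exists g.
Qed.

Lemma seg_str_lt_asym : seg_str_lt x y -> seg_str_lt y x -> False.
Proof.
move=> [p [q [[f Hf] pq]]] [q' [p' [[g Hg] q'p']]].
case: (olt_total Hy q q') => [qq' | [eqq' | q'q]].
- have Hg' := isom_on_restr_lt Hy Hx Hg (down_closed_lt Hy q') (down_closed_lt Hx p') qq'.
  have epq := isom_on_lt_eq (isom_on_comp Hf Hg').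
  by move: pq; rewrite epq (isom_lab Hg qq') ltxx.
- rewrite -eqq' in Hg q'p'.
  have epp := isom_on_lt_eq (isom_on_comp Hf Hg).
  by move: (lt_trans pq q'p'); rewrite epp ltxx.
- have [p0 p0p efp0] := isom_onto Hf q'q.
  have Hf' := isom_on_restr_lt Hx Hy Hf (down_closed_lt Hx p) (down_closed_lt Hy q) p0p.
  rewrite efp0 in Hf'; have epp := isom_on_lt_eq (isom_on_comp Hf' Hg).
  by move: q'p'; rewrite -epp -efp0 (isom_lab Hf p0p) ltxx.
Qed.

Lemma seg_str_lt_prefix_false : seg_str_lt x y -> seg_prefix y x -> False.
Proof.
move=> [p [q [[f Hf] pq]]] [T dT [g Hg]].
have Hg' := isom_on_restr_lt Hy Hx Hg (@down_closedT _) dT (I : True) (p := q).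
have epq := isom_on_lt_eq (isom_on_comp Hf Hg').
by move: pq; rewrite epq (isom_lab Hg (I : True)) ltxx.
Qed.

Lemma seg_prefix_proper_false : seg_prefix x y -> seg_proper_prefix y x -> False.
Proof.
move=> [T dT [f Hf]] [p [g Hg]].
apply: (isom_on_least Hx Hx (isom_on_id _) (@down_closedT _) (g := fun r => g (f r)))
  (I : True) (isom_map Hg (I : True)).
by move=> r r' _ _ rr'; apply: (isom_mono Hg) => //; apply: (isom_mono Hf).
Qed.

End TwoWords.

Lemma seg_proper_prefixW (x y : W) : is_word y ->
  seg_proper_prefix x y -> seg_prefix x y.
Proof. by move=> Hy [p Hp]; exists (fun r => olt r p) => //; apply: down_closed_lt. Qed.

Lemma seg_le_lt_false (x y : W) : is_word x -> is_word y ->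
  seg_le x y -> seg_lt y x -> False.
Proof.
move=> Hx Hy [xy | xy] [yx | yx].
- exact: (seg_prefix_proper_false Hx xy yx).
- exact: (seg_str_lt_prefix_false Hy Hx yx xy).
- exact: (seg_str_lt_prefix_false Hx Hy xy (seg_proper_prefixW Hx yx)).
- exact: (seg_str_lt_asym Hx Hy xy yx).
Qed.

Lemma seg_lt_prefix_trans (s u v : W) : is_word u -> is_word v ->
  seg_lt s u -> seg_prefix u v -> seg_lt s v.
Proof.
move=> Hu Hv /seg_ltP [S [p [f [Hf cut]]]] [T dT [g Hg]].
have Hg' := isom_on_restr_lt Hu Hv Hg (@down_closedT _) dT (I : True) (p := p).
apply/seg_ltP; exists S, (g p), (fun r => g (f r)); split; first exact: isom_on_comp Hf Hg'.
by rewrite (isom_lab Hg (I : True)).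
Qed.

Lemma seg_str_lt_of_prefix (u x v : W) : is_word u -> is_word x ->
  seg_prefix u x -> seg_str_lt u v -> seg_str_lt x v.
Proof.
move=> Hu Hx [T dT [g Hg]] [p [q [[f Hf] pq]]].
have Hg' := isom_on_restr_lt Hu Hx Hg (@down_closedT _) dT (I : True) (p := p).
have [g' [Hg'' _ _]] := isom_on_inv Hu Hx Hg' (inhabits p).
exists (g p), q; split; first by exists (fun r => f (g' r)); apply: isom_on_comp Hg'' Hf.
by rewrite (isom_lab Hg (I : True)).
Qed.

End Comparison.

Section LexOrder.
Variables (d : Order.disp_t) (A : finOrderType d).
Local Notation W := (word A).
Local Notation pos w := (ot (wo w)).

Lemma weq_refl (x : W) : weq x x.
Proof. by exists id; split=> //; exists id. Qed.

Lemma weq_sym (x y : W) : weq x y -> weq y x.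
Proof.
move=> [f [[g fK gK] f_mono f_lab]]; exists g; split.
- by exists f.
- by move=> p q; rewrite f_mono !gK.
- by move=> p; rewrite -{2}(gK p) f_lab.
Qed.

Lemma weq_of_mono_surj (x y : W) (f : pos x -> pos y) : is_word x -> is_word y ->
  (forall q, exists p, f p = q) -> (forall p p', olt p p' -> olt (f p) (f p')) ->
  (forall p, lab (f p) = lab p) -> weq x y.
Proof.
move=> Hx Hy f_surj f_mono f_lab.
have Hf : isom_on x y (fun _ => True) (fun _ => True) f.
  by split=> // [q _ | p p' _ _]; [have [p <-] := f_surj q; exists p | apply: f_mono].
pose g q := proj1_sig (constructive_indefinite_description _ (f_surj q)).
have gK q : f (g q) = q := proj2_sig (constructive_indefinite_description _ (f_surj q)).
exists f; split=> //.
- by exists g => // p; apply: (isom_on_inj Hx Hy Hf).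
- move=> p p'; split; first exact: f_mono.
  exact: (isom_on_reflect_lt Hx Hy Hf).
Qed.

Lemma wprefix_seg (x y : W) : wprefix x y -> seg_prefix x y.
Proof.
move=> [z [_ [h [[k hK kK] h_mono h_lab]]]].
exists (fun q => exists p, h q = inl p).
- move=> q' q /h_mono + [p ehq]; rewrite ehq.
  by case: (h q') => [p' _ | //]; exists p'.
exists (fun p => k (inl p)); split=> //.
- by move=> p _; exists p; rewrite kK.
- by move=> q [p ehq]; exists p; rewrite // -ehq hK.
- by move=> p p' _ _ pp'; apply/h_mono; rewrite !kK.
- by move=> p _; rewrite -h_lab kK.
Qed.

Lemma weq_cat_compl (x y : W) T f : is_word x -> is_word y ->
  isom_on x y (fun _ => True) T f -> down_closed T ->
  weq y (wcat x (wsub y (fun q => ~ T q))).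
Proof.
move=> Hx Hy Hf dT; apply: weq_sym.
pose k (w : pos (wcat x (wsub y (fun q => ~ T q)))) : pos y :=
  match w with inl p => f p | inr s => proj1_sig s end.
apply: (@weq_of_mono_surj _ _ k _ Hy).
- exact: is_word_cat Hx (is_word_sub _ Hy).
- move=> q; case: (classic (T q)) => [/(isom_onto Hf) [p _ <-] | nTq].
  + by exists (inl p).
  + by exists (inr (exist _ q nTq)).
- move=> [p | [q nTq]] [p' | [q' nTq']] //= ww'.
  + exact: (isom_mono Hf).
  + case: (olt_total Hy (f p) q') => [// | [efp | q'fp]]; case: nTq'.
    * by rewrite -efp; apply: (isom_map Hf).
    * by apply: dT q'fp (isom_map Hf (I : True)).
- by move=> [p | s] //=; apply: (isom_lab Hf).
Qed.

Lemma seg_wprefix (x y : W) : is_word x -> is_word y -> seg_prefix x y -> wprefix x y.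
Proof.
move=> Hx Hy [T dT [f Hf]]; exists (wsub y (fun q => ~ T q)).
by split; [apply: is_word_sub | apply: weq_cat_compl Hf dT].
Qed.

Lemma str_lt_seg (x y : W) : str_lt x y -> seg_str_lt x y.
Proof.
move=> [w [z [z' [a [b [_ _ _ ab [[hx [[kx hxK kxK] hx_mono hx_lab]]
                                   [hy [[ky hyK kyK] hy_mono hy_lab]]]]]]]]].
pose p := kx (inl (inr tt)); pose q := ky (inl (inr tt)).
have below_p r : olt r p -> exists s, hx r = inl (inl s).
  by move/hx_mono; rewrite kxK; case: (hx r) => [[s | []] | s] //; exists s.
have below_q r : olt r q -> exists s, hy r = inl (inl s).
  by move/hy_mono; rewrite kyK; case: (hy r) => [[s | []] | s] //; exists s.
pose f r := if hx r is inl (inl s) then ky (inl (inl s)) else q.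
exists p, q; split; last by rewrite -(hx_lab p) -(hy_lab q) kxK kyK.
exists f; split.
- by move=> r /below_p [s ehx]; rewrite /f ehx; apply/hy_mono; rewrite !kyK.
- move=> r /below_q [s ehy]; exists (kx (inl (inl s))).
  + by apply/hx_mono; rewrite !kxK.
  + by rewrite /f kxK -ehy hyK.
- move=> r r' /below_p [s ehx] /below_p [s' ehx'] /hx_mono.
  by rewrite /f ehx ehx' => ss'; apply/hy_mono; rewrite !kyK.
- by move=> r /below_p [s ehx]; rewrite /f ehx -hy_lab kyK -hx_lab ehx.
Qed.

Lemma weq_split (x y : W) p q f : is_word x -> is_word y ->
  isom_on x y (fun r => olt r p) (fun r => olt r q) f ->
  weq y (wcat (wcat (wsub x (fun r => olt r p)) (wletter (lab q)))
              (wsub y (fun r => olt q r))).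
Proof.
move=> Hx Hy Hf; apply: weq_sym.
pose k (w : pos (wcat (wcat (wsub x (fun r => olt r p)) (wletter (lab q)))
                      (wsub y (fun r => olt q r)))) : pos y :=
  match w with
  | inl (inl s) => f (proj1_sig s) | inl (inr _) => q | inr s => proj1_sig s end.
apply: (@weq_of_mono_surj _ _ k _ Hy).
- apply: is_word_cat; last exact: is_word_sub.
  by apply: is_word_cat; [apply: is_word_sub | apply: is_word_letter].
- move=> r; case: (olt_total Hy r q) => [/(isom_onto Hf) [r' r'p <-] | [-> | qr]].
  + by exists (inl (inl (exist _ r' r'p))).
  + by exists (inl (inr tt)).
  + by exists (inr (exist _ r qr)).
- move=> [[[s sp] | []] | [s qs]] [[[s' s'p] | []] | [s' qs']] //=.
  + exact: (isom_mono Hf).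
  + by move=> _; apply: (isom_map Hf).
  + by move=> _; apply: (olt_trans Hy (isom_map Hf sp)).
- by move=> [[[s sp] | []] | s] //=; apply: (isom_lab Hf).
Qed.

Lemma seg_str_lt_str (x y : W) : is_word x -> is_word y -> seg_str_lt x y -> str_lt x y.
Proof.
move=> Hx Hy [p [q [[f Hf] pq]]].
exists (wsub x (fun r => olt r p)), (wsub x (fun r => olt p r)),
  (wsub y (fun r => olt q r)), (lab p), (lab q).
split; do ?exact: is_word_sub; first exact: pq.
by split; [apply: (weq_split Hx Hx (isom_on_id _)) | apply: weq_split Hf].
Qed.

Lemma lex_le_seg (x y : W) : lex_le x y -> seg_le x y.
Proof. by case=> [/wprefix_seg | /str_lt_seg]; [left | right]. Qed.

Lemma seg_le_lex (x y : W) : is_word x -> is_word y -> seg_le x y -> lex_le x y.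
Proof.
by move=> Hx Hy [/(seg_wprefix Hx Hy) | /(seg_str_lt_str Hx Hy)]; [left | right].
Qed.

End LexOrder.

Section PowersOfPrimeWords.
Variables (d : Order.disp_t) (A : finOrderType d).
Local Notation W := (word A).
Local Notation pos w := (ot (wo w)).

Lemma lex_lt_nonempty (u v : W) : is_word u -> is_word v ->
  lex_lt u v -> inhabited (pos v).
Proof.
move=> Hu Hv [luv nuv]; apply: NNPP => nv.
case: (lex_le_seg luv) => [[T _ [f _]] | [_ [q _]]]; last exact: nv (inhabits q).
apply: nuv; apply: (weq_of_mono_surj (f := f)) => // [q | p | p]; case: nv.
- exact: inhabits q.
- exact: inhabits (f p).
- exact: inhabits (f p).
Qed.

Lemma weq_cat_nonempty (x z : W) : is_word x -> inhabited (pos z) -> ~ weq x (wcat x z).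
Proof.
move=> Hx [z0] /weq_sym [g [_ g_mono _]].
apply: (isom_on_least Hx Hx (isom_on_id _) (@down_closedT _) (g := fun p => g (inl p)))
  (g (inr z0)) I _; last exact/g_mono.
by move=> p p' _ _ pp'; apply/g_mono.
Qed.

Lemma seg_prefix_cat_pow (u z : W) (a : ord) : is_ord a -> inhabited (ot a) ->
  seg_prefix u (wcat (wpow u a) z).
Proof.
move=> Ha [i1]; have [i0 [_ min_i0]] := ex_olt_min Ha (ex_intro (fun _ => True) i1 I).
exists (fun w : pos (wcat (wpow u a) z) => if w is inl jr then jr.1 = i0 else False).
  move=> [[j r] | s] [[j' r'] | s'] //= [jj' | [-> _]] // ej'.
  by case: (min_i0 j I); rewrite -ej'.
exists (fun r => inl (i0, r)); split=> //.
- by move=> [[j r] | //] /= ->; exists r.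
- by move=> r r' _ _ rr'; right.
Qed.

Lemma seg_prefix_cat_pow0 (u v : W) (a : ord) : ~ inhabited (ot a) ->
  seg_prefix (wcat (wpow u a) v) v.
Proof.
move=> na; have inr_only (w : pos (wcat (wpow u a) v)) : exists r, w = inr r.
  by case: w => [jr | r]; [case: na; exact: (inhabits jr.1) | exists r].
exists (fun _ => True) => //.
exists (fun w : pos (wcat (wpow u a) v) =>
          match w with inl jr => False_rect _ (na (inhabits jr.1)) | inr r => r end).
split=> // [q _ | w w' _ _ | w _]; first by exists (inr q).
- by case: (inr_only w) => r ->; case: (inr_only w') => r' ->.
- by case: (inr_only w) => r ->.
Qed.

Lemma prime_suffix_ge (v : W) (T : pos v -> Prop) : is_word v -> prime_word v ->
  down_closed T -> (exists r, ~ T r) -> seg_le v (wsub v (fun r => ~ T r)).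
Proof.
move=> Hv [_ v_suffix] dT [r1 nTr1].
case: (classic (exists r, T r)) => [[r0 Tr0] | nT].
  apply: lex_le_seg; apply: v_suffix (weq_cat_compl _ Hv (isom_on_val T) dT).
  - exact: is_word_sub.
  - exact: is_word_sub.
  - exact: inhabits (exist _ r0 Tr0).
  - exact: inhabits (exist _ r1 nTr1).
  - exact: is_word_sub.
left; exists (fun _ => True) => //.
exists (fun r => exist (fun r => ~ T r) r (fun Tr => nT (ex_intro _ r Tr))); split=> //.
by move=> [q nTq] _; exists q => //; apply: sig_inj.
Qed.

Lemma prime_suffix_not_seg_lt (v y : W) (T : pos v -> Prop) :
  is_word v -> is_word y -> prime_word v -> down_closed T -> (exists r, ~ T r) ->
  seg_prefix y v -> ~ seg_lt (wsub v (fun r => ~ T r)) y.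
Proof.
move=> Hv Hy pv dT nT yv sy.
apply: (seg_le_lt_false Hv (is_word_sub _ Hv) (prime_suffix_ge Hv pv dT nT)).
exact: seg_lt_prefix_trans Hy Hv sy yv.
Qed.

Lemma seg_lt_compl_of_cut (x w y : W) S D p q h g : is_word x ->
  isom_on x w S (fun r => olt r p) h -> lt_cut S (lab p) ->
  isom_on w y (fun r => olt r p /\ ~ D r) (fun r => olt r q) g -> lab q = lab p ->
  seg_lt (wsub x (fun r => ~ (S r /\ D (h r)))) y.
Proof.
move=> Hx Hh cut Hg eq_lab; apply/seg_ltP.
exists (fun a => S (proj1_sig a)), q, (fun a => g (h (proj1_sig a))); split.
  apply: isom_on_comp (isom_on_sub _ Hh) Hg => r Sr.
  by split=> [nSD Dhr | nD [_ Dhr]]; [apply: nSD | apply: nD].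
case: cut => [allS | [r ES rp]]; [by left | right].
have nr : ~ (S r /\ D (h r)) by case=> /ES /(olt_irr Hx).
by exists (exist _ r nr) => //; rewrite eq_lab.
Qed.

Definition in_blocks (u z : W) (a : ord) (B : ot a -> Prop)
    (w : pos (wcat (wpow u a) z)) : Prop :=
  if w is inl jr then B jr.1 else False.

Lemma down_closed_in_blocks (u z : W) (a : ord) (B : ot a -> Prop) :
  down_closed B -> down_closed (@in_blocks u z a B).
Proof. by move=> dB [[j r] | s] [[j' r'] | s'] //= [jj' | [-> _]] //; apply: dB. Qed.

Lemma weq_pow_of_blocks (u v : W) (a : ord) (B : ot a -> Prop) S T h :
  is_word u -> is_word v -> is_ord a -> inhabited (pos v) ->
  isom_on v (wcat (wpow u a) v) S T h ->
  (forall r, S r /\ in_blocks B (h r)) -> (forall w, in_blocks B w -> T w) ->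
  weq v (wpow u (Osub B)).
Proof.
move=> Hu Hv Ha v0 Hh blocks TB.
have [g [Hg _ gK]] := isom_on_inv Hv (is_word_cat (is_word_pow Hu Ha) Hv) Hh v0.
have Tjr (jr : pos (wpow u (Osub B))) : T (inl (proj1_sig jr.1, jr.2)).
  by apply: TB; case: jr => [[j Bj] r].
apply: weq_sym; apply: (weq_of_mono_surj (f := fun jr : pos (wpow u (Osub B)) => g (inl (proj1_sig jr.1, jr.2)))
  (is_word_pow Hu (is_ord_sub _ Ha)) Hv).
- move=> r; move: (blocks r) => [Sr]; case E: (h r) => [[j r'] | //] /= Bj.
  by exists (exist _ j Bj, r'); rewrite /= -E gK.
- move=> [j r] [j' r'] jr; apply: (isom_mono Hg (Tjr _) (Tjr _)).
  by case: jr => /= [jj' | [ejj' rr']]; [left | right; rewrite ejj'].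
- by move=> jr; rewrite (isom_lab Hg (Tjr jr)).
Qed.

Lemma isom_on_tail_inl (u z : W) (a : ord) i r0 : is_ord a ->
  isom_on (wcat (wpow u a) z) u
    (fun w => olt w (inl (i, r0)) /\ ~ in_blocks (fun j => olt j i) w)
    (fun r => olt r r0) (fun w => if w is inl jr then jr.2 else r0).
Proof.
move=> Ha; have tail (w : pos (wcat (wpow u a) z)) :
    olt w (inl (i, r0)) /\ ~ in_blocks (fun j => olt j i) w ->
    exists2 r, w = inl (i, r) & olt r r0.
  case: w => [[j r] | s] /= [wi nji]; last by case: wi.
  by case: wi => [ji | [-> rr0]]; [case: nji | exists r].
split.
- by move=> w /tail [r -> rr0].
- by move=> r rr0; exists (inl (i, r)) => //; split; [right | apply: (olt_irr Ha)].
- by move=> w w' /tail [r -> _] /tail [r' -> _] /= [/(olt_irr Ha) | []].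
- by move=> w /tail [r -> _].
Qed.

Lemma isom_on_tail_inr (u z : W) (a : ord) p :
  isom_on (wcat (wpow u a) z) z
    (fun w => olt w (inr p) /\ ~ in_blocks (fun _ => True) w)
    (fun r => olt r p) (fun w => if w is inr r then r else p).
Proof.
have tail (w : pos (wcat (wpow u a) z)) : olt w (inr p) /\ ~ in_blocks (fun _ => True) w -> exists2 r, w = inr r & olt r p.
  by case: w => [[j r] | r] /= [wp nB]; [case: nB | exists r].
split.
- by move=> w /tail [r -> rp].
- by move=> r rp; exists (inr r) => //; split.
- by move=> w w' /tail [r -> _] /tail [r' -> _].
- by move=> w /tail [r -> _].
Qed.

(* The positions of [v] sent into the complete blocks [B] form a prefix equal
   to a power of [u]; the rest of [v] is sent into what follows them. *)
Lemma cat_pow_cut_false (u v y : W) (a : ord) (B : ot a -> Prop) p q g S h :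
  is_word u -> is_word v -> is_word y -> is_ord a -> prime_word v -> ~ weq u v ->
  inhabited (pos v) -> seg_prefix y v -> down_closed B ->
  (forall w, in_blocks B w -> olt w p) ->
  isom_on (wcat (wpow u a) v) y (fun w => olt w p /\ ~ in_blocks B w) (fun r => olt r q) g ->
  lab q = lab p ->
  isom_on v (wcat (wpow u a) v) S (fun w => olt w p) h -> lt_cut S (lab p) -> False.
Proof.
move=> Hu Hv Hy Ha pv nuv v0 yv dB Bp Hg eq_lab Hh cut.
have dT : down_closed (fun r => S r /\ in_blocks B (h r)).
  exact: down_closed_isom_preimage Hh (lt_cut_down_closed Hv cut) (down_closed_in_blocks dB).
case: (classic (forall r, S r /\ in_blocks B (h r))) => [blocks | /not_all_ex_not nT].
- have [v_prim _] := pv.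
  have [_ /nuv //] := v_prim u _ Hu (is_ord_sub _ Ha) (weq_pow_of_blocks Hu Hv Ha v0 Hh blocks Bp).
- exact: prime_suffix_not_seg_lt Hv Hy pv dT nT yv (seg_lt_compl_of_cut Hv Hh cut Hg eq_lab).
Qed.

Lemma not_seg_lt_cat_pow (u v : W) (a : ord) : is_word u -> is_word v -> is_ord a ->
  prime_word v -> ~ weq u v -> seg_prefix u v -> inhabited (pos v) ->
  ~ seg_lt v (wcat (wpow u a) v).
Proof.
move=> Hu Hv Ha pv nuv uv v0 /seg_ltP [S [[[i r0] | p] [h [Hh cut]]]].
- apply: (cat_pow_cut_false Hu Hv Hu Ha pv nuv v0 uv (down_closed_lt Ha i) _
            (isom_on_tail_inl _ _ _ Ha) _ Hh cut) => //.
  by move=> [[j r] | //] /= ji; left.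
- apply: (cat_pow_cut_false Hu Hv Hv Ha pv nuv v0 (seg_prefix_refl _) (@down_closedT _) _
            (isom_on_tail_inr _ _ _) _ Hh cut) => //.
  by move=> [[j r] | //].
Qed.

Lemma cat_pow_seg_le (u v : W) (a : ord) : is_word u -> is_word v -> is_ord a ->
  prime_word v -> ~ weq u v -> seg_prefix u v -> inhabited (pos v) ->
  seg_le (wcat (wpow u a) v) v.
Proof.
move=> Hu Hv Ha pv nuv uv v0.
case: (seg_le_or_gt (is_word_cat (is_word_pow Hu Ha) Hv) Hv) => // vw.
by case: (not_seg_lt_cat_pow Hu Hv Ha pv nuv uv v0 vw).
Qed.

End PowersOfPrimeWords.

Theorem mainTheorem10 (d : Order.disp_t) (A : finOrderType d) (u v : word A) :
  is_word u -> is_word v -> prime_word u -> prime_word v -> lex_lt u v ->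
  forall alpha : ord, is_ord alpha ->
    lex_lt (wpow u alpha) (wcat (wpow u alpha) v) /\
    lex_le (wcat (wpow u alpha) v) v.
Proof.
move=> Hu Hv _ pv [luv nuv] a Ha.
have Hua := is_word_pow Hu Ha.
have Huav := is_word_cat Hua Hv.
have v0 := lex_lt_nonempty Hu Hv (conj luv nuv).
split.
  split; last exact: weq_cat_nonempty Hua v0.
  by left; exists v; split; [exact: Hv | exact: weq_refl].
apply: (seg_le_lex Huav Hv).
case: (lex_le_seg luv) => [uv | uv]; first exact: cat_pow_seg_le Hu Hv Ha pv nuv uv v0.
case: (classic (inhabited (ot a))) => [a0 | na].
- by right; apply: seg_str_lt_of_prefix Hu Huav (seg_prefix_cat_pow _ _ Ha a0) uv.
- by left; apply: seg_prefix_cat_pow0.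
Qed.
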